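(* For any $0\le t<1$ and $x\in\mathbb{R}$, $J^*(t,x)\ge g(t,x)$, where $$J^*(t,x)=\begin{cases}(1-t)^{n+1/2}(F_{2n+1}+G_{2n+1})(x/\sqrt{1-t})\,j(B^* ), & |x|<B^*\sqrt{1-t},\\ g(t,x), & |x|\ge B^*\sqrt{1-t}.\end{cases}$$
   Context: $n\ge0$ is an integer. $F_q(y):=\int_0^\infty u^{q-1}e^{yu-u^2/2}\,\mathrm{d}u$ and $G_q(y):=F_q(-y)$. $B^*>0$ is the unique zero of $B\mapsto(2n+1)-BF'_{2n+1}(B)/F_{2n+1}(B)$; it maximizes $B\mapsto B^{2n+1}/F_{2n+1}(B)$. $U(t,x)=(1-t)^{n+1/2}(B^* )^{2n+1}F_{2n+1}(x/\sqrt{1-t})/F_{2n+1}(B^* )$ if $x<B^*\sqrt{1-t}$, and $U(t,x)=x^{2n+1}$ otherwise. $g(t,x):=(U(t,x)-x^{2n+1})1_{\{x\le0\}}+(U(t,-x)+x^{2n+1})1_{\{x>0\}}$. $j(D):=\frac{1}{(F_{2n+1}+G_{2n+1})(D)}[D^{2n+1}+(B^* )^{2n+1}G_{2n+1}(D)/F_{2n+1}(B^* )]$ for $D\ge0$. *)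

From Stdlib Require Import Reals.
From Coquelicot Require Import Coquelicot.
Open Scope R_scope.

Definition F (q : nat) (y : R) : R :=
  RInt_gen (fun u => u ^ (q - 1) * exp (y * u - u ^ 2 / 2))
    (at_point 0) (Rbar_locally p_infty).

Definition G (q : nat) (y : R) : R := F q (- y).

Definition Bfun (n : nat) (B : R) : R :=
  INR (2 * n + 1) - B * Derive (F (2 * n + 1)) B / F (2 * n + 1) B.

Definition U (n : nat) (Bs t x : R) : R :=
  if Rlt_dec x (Bs * sqrt (1 - t)) then
    Rpower (1 - t) (INR n + 1 / 2) * Bs ^ (2 * n + 1)
      * F (2 * n + 1) (x / sqrt (1 - t)) / F (2 * n + 1) Bs
  else x ^ (2 * n + 1).

Definition g (n : nat) (Bs t x : R) : R :=
  if Rle_dec x 0 then U n Bs t x - x ^ (2 * n + 1)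
  else U n Bs t (- x) + x ^ (2 * n + 1).

Definition j (n : nat) (Bs D : R) : R :=
  / (F (2 * n + 1) D + G (2 * n + 1) D)
  * (D ^ (2 * n + 1) + Bs ^ (2 * n + 1) * G (2 * n + 1) D / F (2 * n + 1) Bs).

Definition Jstar (n : nat) (Bs t x : R) : R :=
  if Rlt_dec (Rabs x) (Bs * sqrt (1 - t)) then
    Rpower (1 - t) (INR n + 1 / 2)
      * (F (2 * n + 1) (x / sqrt (1 - t)) + G (2 * n + 1) (x / sqrt (1 - t)))
      * j n Bs Bs
  else g n Bs t x.

(* For |x| < Bs sqrt(1-t), write s = sqrt(1-t) and z = |x|/s.  Both Jstar and
   g are then explicit, and Jstar - g = s^(2n+1) (Bs^(2n+1) F(z)/F(Bs) - z^(2n+1)),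
   so the claim is that h(z) = z^(2n+1)/F(z) on [0, Bs] is maximal at Bs.
   Differentiating under the integral sign gives F'_q = F_(q+1), hence
   h'(z) = z^(2n)/F(z) * Bfun(z): an interior maximum would be a positive zero
   of Bfun other than Bs, which uniqueness rules out. *)

From Stdlib Require Import Reals Lra Lia Classical.
From Coquelicot Require Import Coquelicot.
Open Scope R_scope.

Lemma exp_le_compat x y : x <= y -> exp x <= exp y.
Proof.
  intros [Hlt | ->]; [left; apply exp_increasing, Hlt | apply Rle_refl].
Qed.

Lemma exp_INR_mult k u : exp (INR k * u) = exp u ^ k.
Proof.
  induction k as [|k IH].
  - simpl; rewrite Rmult_0_l; apply exp_0.
  - rewrite S_INR, <- tech_pow_Rmult, <- IH, <- exp_plus; f_equal; ring.
Qed.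

Lemma exp_sub_1_le w : exp w - 1 <= w * exp w.
Proof.
  pose proof (exp_ineq1_le (- w)).
  assert (Hinv : exp (- w) * exp w = 1)
    by (rewrite <- exp_plus, Rplus_opp_l; apply exp_0).
  pose proof (exp_pos w); nra.
Qed.

Lemma exp_taylor2_bound a : Rabs (exp a - 1 - a) <= a ^ 2 * exp (Rabs a).
Proof.
  pose proof (exp_ineq1_le a).
  rewrite Rabs_pos_eq by lra.
  destruct (Rle_lt_dec 0 a) as [Ha | Ha].
  - rewrite Rabs_pos_eq by lra.
    pose proof (exp_sub_1_le a); nra.
  - rewrite Rabs_left by lra.
    set (w := - a).
    assert (Hinv : exp a * exp w = 1)
      by (unfold w; rewrite <- exp_plus, Rplus_opp_r; apply exp_0).
    pose proof (exp_sub_1_le w); pose proof (exp_ineq1_le w).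
    pose proof (exp_pos a); pose proof (exp_pos w).
    (* [exp a - 1 - a = exp a * (w exp w - (exp w - 1))] and [w <= exp w - 1 <= w exp w] *)
    assert (exp a - 1 - a <= a ^ 2).
    { replace (exp a - 1 - a) with (exp a * (1 - exp w + w * exp w)).
      2:{ transitivity (exp a - exp a * exp w + w * (exp a * exp w)); [ring|].
          rewrite Hinv; unfold w; ring. }
      apply Rle_trans with (exp a * (w * (w * exp w))).
      - apply Rmult_le_compat_l; unfold w in *; nra.
      - replace (a ^ 2) with (w * w * (exp a * exp w)) by (rewrite Hinv; unfold w; ring).
        right; ring. }
    assert (1 <= exp w) by (unfold w in *; lra).
    nra.
Qed.

Lemma is_RInt_gen_nonneg_bounded (f : R -> R) (C : R) :
  (forall u, 0 <= u -> 0 <= f u) -> (forall u, continuous f u) ->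
  (forall b, 0 <= b -> RInt f 0 b <= C) ->
  exists l, is_RInt_gen f (at_point 0) (Rbar_locally p_infty) l /\
            (forall b, 0 <= b -> RInt f 0 b <= l).
Proof.
  intros Hpos Hcont HC.
  assert (Hex : forall a b, ex_RInt f a b)
    by (intros; apply (@ex_RInt_continuous R_CompleteNormedModule); auto).
  assert (Hmono : forall a b, 0 <= a -> a <= b -> RInt f 0 a <= RInt f 0 b).
  { intros a b Ha Hab.
    rewrite <- (RInt_Chasles f 0 a b) by auto.
    assert (0 <= RInt f a b) by (apply RInt_ge_0; auto; intros; apply Hpos; lra).
    simpl; unfold plus; simpl; lra. }
  set (E := fun v => exists b, 0 <= b /\ v = RInt f 0 b).
  destruct (completeness E) as [l [Hub Hlub]].
  - exists C; intros v [b [Hb ->]]; auto.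
  - exists (RInt f 0 0), 0; split; [lra | reflexivity].
  - exists l; split; [| intros b Hb; apply Hub; exists b; auto].
    intros P [eps HP].
    destruct (classic (exists b, 0 <= b /\ l - eps < RInt f 0 b))
      as [[b0 [Hb0 Hlt]] | Hno].
    + apply Filter_prod with (fun a => a = 0) (fun b => b0 < b);
        [reflexivity | exists b0; auto |].
      intros a b -> Hb; simpl.
      exists (RInt f 0 b); split; [apply (@RInt_correct R_CompleteNormedModule); auto |].
      apply HP.
      assert (RInt f 0 b0 <= RInt f 0 b) by (apply Hmono; lra).
      assert (RInt f 0 b <= l) by (apply Hub; exists b; split; [lra | auto]).
      destruct eps as [e He]; simpl in *.
      unfold ball; simpl; unfold AbsRing_ball, abs, minus, plus, opp; simpl.
      apply Rabs_def1; lra.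
    + assert (l <= l - eps); [| destruct eps; simpl in *; lra].
      apply Hlub; intros v [b [Hb ->]].
      apply Rnot_lt_le; intro Hlt; apply Hno; exists b; auto.
Qed.

Definition kernel (k : nat) (y u : R) : R := u ^ k * exp (y * u - u ^ 2 / 2).

Definition moment (k : nat) (y : R) : R :=
  RInt_gen (kernel k y) (at_point 0) (Rbar_locally p_infty).

Lemma kernel_continuous k y u : continuous (kernel k y) u.
Proof.
  apply (@ex_derive_continuous R_AbsRing R_NormedModule).
  unfold kernel; auto_derive; auto.
Qed.

Lemma kernel_nonneg k y u : 0 <= u -> 0 <= kernel k y u.
Proof. intros; unfold kernel; apply Rmult_le_pos; [apply pow_le | left; apply exp_pos]; auto. Qed.

(* [u ^ k <= exp (k u)], and the exponent [k u + y u - u^2/2 + u] is a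
   concave quadratic maximal at [u = y + k + 1]. *)
Lemma kernel_le_exp_neg k y u : 0 <= u ->
  kernel k y u <= exp ((y + INR k + 1) ^ 2 / 2) * exp (- u).
Proof.
  intros Hu; unfold kernel.
  assert (u ^ k <= exp u ^ k)
    by (apply pow_incr; pose proof (exp_ineq1_le u); lra).
  apply Rle_trans with (exp u ^ k * exp (y * u - u ^ 2 / 2)).
  - apply Rmult_le_compat_r; [left; apply exp_pos | auto].
  - rewrite <- exp_INR_mult, <- !exp_plus; apply exp_le_compat.
    pose proof (pow2_ge_0 (u - (y + INR k + 1))); nra.
Qed.

Lemma RInt_scal_exp_neg K b : RInt (fun u => K * exp (- u)) 0 b = K * (1 - exp (- b)).
Proof.
  apply is_RInt_unique.
  replace (K * (1 - exp (- b))) with (minus (- K * exp (- b)) (- K * exp (- 0)))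
    by (unfold minus, plus, opp; simpl; rewrite Ropp_0, exp_0; ring).
  apply (@is_RInt_derive R_CompleteNormedModule (fun u => - K * exp (- u))).
  - intros; auto_derive; auto; ring.
  - intros; apply (@ex_derive_continuous R_AbsRing R_NormedModule); auto_derive; auto.
Qed.

Lemma moment_correct k y :
  is_RInt_gen (kernel k y) (at_point 0) (Rbar_locally p_infty) (moment k y) /\
  (forall b, 0 <= b -> RInt (kernel k y) 0 b <= moment k y).
Proof.
  set (K := exp ((y + INR k + 1) ^ 2 / 2)).
  destruct (is_RInt_gen_nonneg_bounded (kernel k y) K) as [l [Hl Hle]].
  - apply kernel_nonneg.
  - apply kernel_continuous.
  - intros b Hb.
    apply Rle_trans with (RInt (fun u => K * exp (- u)) 0 b).
    + apply RInt_le; auto.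
      * apply (@ex_RInt_continuous R_CompleteNormedModule); intros; apply kernel_continuous.
      * apply (@ex_RInt_continuous R_CompleteNormedModule); intros.
        apply (@ex_derive_continuous R_AbsRing R_NormedModule); auto_derive; auto.
      * intros; apply kernel_le_exp_neg; lra.
    + rewrite RInt_scal_exp_neg.
      pose proof (exp_pos (- b)); assert (0 < K) by apply exp_pos; nra.
  - replace (moment k y) with l by (symmetry; apply is_RInt_gen_unique; auto).
    auto.
Qed.

Lemma moment_pos k y : 0 < moment k y.
Proof.
  destruct (moment_correct k y) as [_ Hle].
  assert (Hex : forall a b, ex_RInt (kernel k y) a b)
    by (intros; apply (@ex_RInt_continuous R_CompleteNormedModule); intros; apply kernel_continuous).
  set (c := exp (-2 * Rabs y - 2)).
  assert (Hc : 0 < c) by apply exp_pos.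
  assert (c <= RInt (kernel k y) 1 2).
  { apply Rle_trans with (RInt (fun _ => c) 1 2).
    - rewrite RInt_const; unfold scal; simpl; unfold mult; simpl; lra.
    - apply RInt_le; auto; [lra | apply ex_RInt_const |].
      intros u Hu; unfold kernel; rewrite <- (Rmult_1_l c).
      apply Rmult_le_compat; try lra; [apply pow_R1_Rle; lra |].
      apply exp_le_compat.
      assert (-2 * Rabs y <= y * u)
        by (destruct (Rle_lt_dec 0 y);
            [rewrite Rabs_pos_eq by lra | rewrite Rabs_left by lra]; nra).
      nra. }
  assert (0 <= RInt (kernel k y) 0 1)
    by (apply RInt_ge_0; auto; [lra | intros; apply kernel_nonneg; lra]).
  assert (H02 : RInt (kernel k y) 0 2 <= moment k y) by (apply Hle; lra).
  rewrite <- (RInt_Chasles (kernel k y) 0 1 2) in H02 by auto.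
  simpl in H02; unfold plus in H02; simpl in H02; lra.
Qed.

Lemma F_moment q : F (S q) = moment q.
Proof. unfold F, moment, kernel; rewrite Nat.sub_1_r; reflexivity. Qed.

Lemma F_pos q y : (0 < q)%nat -> 0 < F q y.
Proof. intros Hq; destruct q; [lia | rewrite F_moment; apply moment_pos]. Qed.

Lemma kernel_taylor2 k y h u : Rabs h <= 1 -> 0 <= u ->
  Rabs (kernel k (y + h) u - kernel k y u - h * kernel (S k) y u)
    <= h ^ 2 * kernel (S (S k)) (Rabs y + 1) u.
Proof.
  intros Hh Hu; unfold kernel.
  set (E := exp (y * u - u ^ 2 / 2)).
  assert (HE : exp ((y + h) * u - u ^ 2 / 2) = E * exp (h * u))
    by (unfold E; rewrite <- exp_plus; f_equal; ring).
  assert (Hp : 0 <= u ^ k * E) by (apply Rmult_le_pos; [apply pow_le | left; apply exp_pos]; auto).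
  rewrite HE.
  replace (u ^ k * (E * exp (h * u)) - u ^ k * E - h * (u ^ S k * E))
    with ((u ^ k * E) * (exp (h * u) - 1 - h * u)) by (simpl; ring).
  rewrite Rabs_mult, (Rabs_pos_eq _ Hp).
  apply Rle_trans with (u ^ k * E * ((h * u) ^ 2 * exp (Rabs (h * u))));
    [apply Rmult_le_compat_l; auto; apply exp_taylor2_bound |].
  replace (u ^ k * E * ((h * u) ^ 2 * exp (Rabs (h * u))))
    with (h ^ 2 * (u ^ S (S k) * (E * exp (Rabs (h * u))))) by (simpl; ring).
  apply Rmult_le_compat_l; [apply pow2_ge_0 |].
  apply Rmult_le_compat_l; [apply pow_le; auto |].
  unfold E; rewrite <- exp_plus; apply exp_le_compat.
  rewrite Rabs_mult, (Rabs_pos_eq u) by auto.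
  assert (y * u <= Rabs y * u) by (apply Rmult_le_compat_r; auto; apply Rle_abs).
  assert (Rabs h * u <= 1 * u) by (apply Rmult_le_compat_r; auto).
  lra.
Qed.

Lemma moment_taylor2 k y h : Rabs h <= 1 ->
  Rabs (moment k (y + h) - moment k y - h * moment (S k) y)
    <= h ^ 2 * moment (S (S k)) (Rabs y + 1).
Proof.
  intros Hh.
  assert (Hrem := is_RInt_gen_minus _ _ _ _
    (is_RInt_gen_minus _ _ _ _ (proj1 (moment_correct k (y + h))) (proj1 (moment_correct k y)))
    (is_RInt_gen_scal _ h _ (proj1 (moment_correct (S k) y)))).
  assert (Hdom := is_RInt_gen_scal _ (h ^ 2) _ (proj1 (moment_correct (S (S k)) (Rabs y + 1)))).
  assert (Hnorm := fun H1 H2 =>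
    @RInt_gen_norm R_CompleteNormedModule _ _ _ _ _ _ _ _ H1 H2 Hrem Hdom).
  simpl in Hnorm; unfold minus, plus, opp, scal, norm in Hnorm; simpl in Hnorm.
  unfold mult, abs in Hnorm; simpl in Hnorm.
  replace (moment k (y + h) - moment k y - h * moment (S k) y)
    with (moment k (y + h) + - moment k y + - (h * moment (S k) y)) by ring.
  apply Hnorm;
    (apply Filter_prod with (fun a => a = 0) (fun b => 0 < b);
      [reflexivity | exists 0; auto | intros a b -> Hb; simpl]).
  - lra.
  - intros u Hu.
    replace (kernel k (y + h) u + - kernel k y u + - (h * kernel (S k) y u))
      with (kernel k (y + h) u - kernel k y u - h * kernel (S k) y u) by ring.
    apply kernel_taylor2; auto; lra.
Qed.

Lemma is_derive_of_taylor2 (f : R -> R) (y l C : R) :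
  (forall h, Rabs h <= 1 -> Rabs (f (y + h) - f y - h * l) <= C * h ^ 2) ->
  is_derive f y l.
Proof.
  intros Hrem; apply is_derive_Reals; intros eps Heps.
  set (K := Rabs C + 1).
  assert (HK : 0 < K) by (unfold K; pose proof (Rabs_pos C); lra).
  assert (Hd : 0 < Rmin 1 (eps / K))
    by (apply Rmin_pos; [lra | apply Rdiv_lt_0_compat; lra]).
  exists (mkposreal _ Hd); intros h Hh0 Hh; simpl in Hh.
  assert (Hh1 : Rabs h <= 1) by (pose proof (Rmin_l 1 (eps / K)); lra).
  assert (Hh2 : Rabs h < eps / K) by (pose proof (Rmin_r 1 (eps / K)); lra).
  assert (Hah : 0 < Rabs h) by (apply Rabs_pos_lt; auto).
  assert (HC : C * h ^ 2 <= Rabs h * (Rabs h * K)).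
  { replace (Rabs h * (Rabs h * K)) with (K * h ^ 2)
      by (rewrite <- Rmult_assoc, <- Rabs_mult, Rabs_pos_eq by nra; ring).
    apply Rmult_le_compat_r; [apply pow2_ge_0 |].
    pose proof (Rle_abs C); unfold K; lra. }
  assert (Rabs h * K < eps)
    by (apply Rlt_le_trans with (eps / K * K);
        [apply Rmult_lt_compat_r | right; field]; lra).
  replace ((f (y + h) - f y) / h - l) with ((f (y + h) - f y - h * l) / h) by (field; auto).
  rewrite Rabs_div by auto.
  apply (Rmult_lt_reg_r (Rabs h)); auto.
  unfold Rdiv; rewrite Rmult_assoc, Rinv_l, Rmult_1_r by lra.
  specialize (Hrem h Hh1); nra.
Qed.

Lemma is_derive_moment k y : is_derive (moment k) y (moment (S k) y).
Proof.
  apply is_derive_of_taylor2 with (moment (S (S k)) (Rabs y + 1)).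
  intros h Hh; rewrite (Rmult_comm _ (h ^ 2)); apply moment_taylor2, Hh.
Qed.

Lemma le_right_endpoint_of_no_critical_point (h h' : R -> R) (a b z : R) :
  (forall c, is_derive h c (h' c)) ->
  (forall c, a < c < b -> h' c <> 0) ->
  h a <= h b -> a <= z <= b -> h z <= h b.
Proof.
  intros Hder Hcrit Hab Hz.
  apply Rnot_lt_le; intro Hzb.
  assert (Hdpt : forall c, derivable_pt_lim h c (h' c))
    by (intro; apply is_derive_Reals, Hder).
  destruct (continuity_ab_maj h a b) as [c [Hmax Hc]]; [lra | |].
  { intros c _; apply derivable_continuous_pt; exists (h' c); apply Hdpt. }
  assert (h z <= h c) by (apply Hmax; lra).
  assert (Hca : c <> a) by (intros ->; lra).
  assert (Hcb : c <> b) by (intros ->; lra).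
  apply (Hcrit c); [lra |].
  apply (deriv_maximum h a b c (exist _ (h' c) (Hdpt c))); try lra.
  intros; apply Hmax; lra.
Qed.

Lemma is_derive_pow_div_F (n : nat) (c : R) :
  is_derive (fun z => z ^ (2 * n + 1) / F (2 * n + 1) z) c
    (c ^ (2 * n) / F (2 * n + 1) c * Bfun n c).
Proof.
  unfold Bfun.
  replace (2 * n + 1)%nat with (S (2 * n)) by lia.
  rewrite F_moment, (is_derive_unique _ _ _ (is_derive_moment (2 * n) c)).
  pose proof (moment_pos (2 * n) c).
  replace (c ^ (2 * n) / moment (2 * n) c
           * (INR (S (2 * n)) - c * moment (S (2 * n)) c / moment (2 * n) c))
    with ((INR (S (2 * n)) * 1 * c ^ Nat.pred (S (2 * n)) * moment (2 * n) c
           - c ^ S (2 * n) * moment (S (2 * n)) c) / moment (2 * n) c ^ 2)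
    by (rewrite <- tech_pow_Rmult; change (Nat.pred (S (2 * n))) with (2 * n)%nat; field; lra).
  apply is_derive_div; [| apply is_derive_moment | lra].
  apply is_derive_pow, (@is_derive_id R_AbsRing).
Qed.

Lemma pow_div_F_le_at_Bs n Bs (HBpos : 0 < Bs)
  (HBuniq : forall B, 0 < B -> Bfun n B = 0 -> B = Bs) z :
  0 <= z <= Bs -> z ^ (2 * n + 1) / F (2 * n + 1) z <= Bs ^ (2 * n + 1) / F (2 * n + 1) Bs.
Proof.
  set (m := (2 * n + 1)%nat).
  assert (HF : forall y, 0 < F m y) by (intro; apply F_pos; unfold m; lia).
  apply (le_right_endpoint_of_no_critical_point
           (fun z => z ^ m / F m z) (fun c => c ^ (2 * n) / F m c * Bfun n c)).
  - apply is_derive_pow_div_F.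
  - intros c Hc Hcrit.
    apply Rmult_integral in Hcrit as [H0 | H0].
    + assert (0 < c ^ (2 * n) / F m c) by (apply Rdiv_lt_0_compat; [apply pow_lt | apply HF]; lra).
      lra.
    + pose proof (HBuniq c ltac:(lra) H0); lra.
  - rewrite pow_i by (unfold m; lia).
    unfold Rdiv; rewrite Rmult_0_l.
    apply Rlt_le, Rdiv_lt_0_compat; [apply pow_lt; lra | apply HF].
Qed.

Lemma pow_opp_odd n x : (- x) ^ (2 * n + 1) = - x ^ (2 * n + 1).
Proof.
  replace (- x) with ((-1) * x) by ring.
  rewrite Rpow_mult_distr, Nat.add_1_r, pow_1_odd; ring.
Qed.

Lemma Rpower_half_odd n a : 0 < a -> Rpower a (INR n + 1 / 2) = sqrt a ^ (2 * n + 1).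
Proof.
  intros Ha.
  rewrite Rpower_plus, Rpower_pow, Rdiv_1_l, Rpower_sqrt by lra.
  rewrite Nat.add_1_r, <- tech_pow_Rmult, pow_sqr, sqrt_sqrt by lra; ring.
Qed.

Lemma U_below n Bs t x : t < 1 -> x < Bs * sqrt (1 - t) ->
  U n Bs t x = sqrt (1 - t) ^ (2 * n + 1) * (Bs ^ (2 * n + 1) / F (2 * n + 1) Bs)
               * F (2 * n + 1) (x / sqrt (1 - t)).
Proof.
  intros Ht Hx; unfold U.
  destruct (Rlt_dec x (Bs * sqrt (1 - t))) as [_ | Hn]; [| contradiction].
  rewrite Rpower_half_odd by lra; unfold Rdiv; ring.
Qed.

Lemma j_diag n Bs : j n Bs Bs = Bs ^ (2 * n + 1) / F (2 * n + 1) Bs.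
Proof.
  unfold j, G.
  assert (0 < F (2 * n + 1) Bs) by (apply F_pos; lia).
  assert (0 < F (2 * n + 1) (- Bs)) by (apply F_pos; lia).
  field; lra.
Qed.

Lemma Jstar_sub_g n Bs t x : t < 1 -> Rabs x < Bs * sqrt (1 - t) ->
  let s := sqrt (1 - t) in
  let m := (2 * n + 1)%nat in
  Jstar n Bs t x - g n Bs t x
    = s ^ m * (Bs ^ m / F m Bs * F m (Rabs x / s) - (Rabs x / s) ^ m).
Proof.
  intros Ht Hx s m.
  assert (Hs : 0 < s) by (apply sqrt_lt_R0; lra).
  unfold Jstar, g, G; fold s m.
  destruct (Rlt_dec (Rabs x) (Bs * s)) as [_ | Hn]; [| contradiction].
  rewrite Rpower_half_odd, j_diag by lra; fold s m.
  set (z := Rabs x / s).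
  destruct (Rle_dec x 0) as [Hx0 | Hx0].
  - assert (Hz : x / s = - z) by (unfold z; rewrite Rabs_left1 by lra; field; lra).
    assert (Hxm : x ^ m = - (s ^ m * z ^ m))
      by (unfold m; rewrite <- Rpow_mult_distr, <- pow_opp_odd; f_equal; unfold z;
          rewrite Rabs_left1 by lra; field; lra).
    rewrite (U_below n Bs t x Ht) by (rewrite Rabs_left1 in Hx; lra); fold s m.
    rewrite Hz, Hxm, Ropp_involutive; ring.
  - assert (Hz : - x / s = - z) by (unfold z; rewrite Rabs_pos_eq by lra; field; lra).
    assert (Hxm : x ^ m = s ^ m * z ^ m)
      by (rewrite <- Rpow_mult_distr; f_equal; unfold z;
          rewrite Rabs_pos_eq by lra; field; lra).
    assert (Hz' : x / s = z) by (unfold z; rewrite Rabs_pos_eq by lra; reflexivity).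
    rewrite (U_below n Bs t (- x) Ht) by (rewrite Rabs_pos_eq in Hx; lra); fold s m.
    rewrite Hz, Hz', Hxm.
    ring.
Qed.

Theorem lemma4p4 (n : nat) (Bs : R)
  (HBpos : 0 < Bs)
  (HBzero : Bfun n Bs = 0)
  (HBuniq : forall B, 0 < B -> Bfun n B = 0 -> B = Bs)
  (t x : R) (Ht0 : 0 <= t) (Ht1 : t < 1) :
  Jstar n Bs t x >= g n Bs t x.
Proof.
  destruct (Rlt_dec (Rabs x) (Bs * sqrt (1 - t))) as [Hx | Hx].
  - apply Rminus_ge, Rle_ge.
    rewrite (Jstar_sub_g n Bs t x Ht1 Hx).
    set (s := sqrt (1 - t)); set (z := Rabs x / s); set (m := (2 * n + 1)%nat).
    assert (Hs : 0 < s) by (apply sqrt_lt_R0; lra).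
    assert (Hz : 0 <= z <= Bs).
    { unfold z; split.
      - apply Rdiv_le_0_compat; [apply Rabs_pos | exact Hs].
      - apply Rle_div_l; [exact Hs | fold s in Hx; lra]. }
    pose proof (pow_div_F_le_at_Bs n Bs HBpos HBuniq z Hz) as Hmax; fold m in Hmax.
    assert (HFz : 0 < F m z) by (apply F_pos; unfold m; lia).
    apply Rmult_le_pos; [apply pow_le; lra |].
    assert (z ^ m <= Bs ^ m / F m Bs * F m z).
    { replace (z ^ m) with (z ^ m / F m z * F m z) by (field; lra).
      apply Rmult_le_compat_r; lra. }
    lra.
  - unfold Jstar; destruct (Rlt_dec _ _); [contradiction | apply Rle_refl].
Qed.
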